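(* Let $X_6=E_6/K_6$ be a semi-equivelar toroidal map of type $[4^1,8^2]$, and let $X_6^\#=E_6^\#/K_6$ be its associated equivelar map of type $[4^4]$. Then: (1) if $X_6^\#$ has exactly $2$ edge orbits, then $X_6$ has exactly $3$ or exactly $4$ edge orbits; (2) if $X_6^\#$ has exactly $1$ edge orbit, then $X_6$ has exactly $2$ or exactly $3$ edge orbits; (3) if $X_6$ has exactly $4$ edge orbits, then $X_6^\#$ has exactly $2$ edge orbits; (4) if $X_6$ has exactly $2$ edge orbits, then $X_6^\#$ has exactly $1$ edge orbit.
   Context: $E_6$ is the semi-equivelar tiling of the plane of type $[4^1,8^2]$ (each vertex surrounded by a square and two regular octagons). $K_6$ is a discrete subgroup of ${\rm Aut}(E_6)$ acting without fixed points and consisting of translations, with rank-2 translation lattice, so that $X_6=E_6/K_6$ is a map on the torus. The associated equivelar tiling $E_6^\#$ is the square tiling (type $[4^4]$) whose vertices are the centres of the octagons of $E_6$, two centres joined when at minimal distance; $X_6^\#:=E_6^\#/K_6$. Edge orbits of a map are the orbits of its automorphism group on its set of edges. *)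

From Stdlib Require Import ZArith List.
Open Scope Z_scope.

Inductive dir := dE | dN | dW | dS.

Definition dvec (d : dir) : Z * Z :=
  match d with dE => (1, 0) | dN => (0, 1) | dW => (-1, 0) | dS => (0, -1) end.
Definition dsucc (d : dir) : dir :=
  match d with dE => dN | dN => dW | dW => dS | dS => dE end.
Definition dpred (d : dir) : dir :=
  match d with dE => dS | dN => dE | dW => dN | dS => dW end.
Definition dopp (d : dir) : dir :=
  match d with dE => dW | dN => dS | dW => dE | dS => dN end.

(* A flag (vertex, edge, face) of the square tiling: vertex (sx,sy), edge from it in
   direction sd, face = the unit square at the vertex spanned by directions sd and
   dsucc sd (if ss = true) or sd and dpred sd (if ss = false). *)
Record sqflag := SqF { sx : Z; sy : Z; sd : dir; ss : bool }.

Definition s0 (f : sqflag) : sqflag :=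
  SqF (sx f + fst (dvec (sd f))) (sy f + snd (dvec (sd f))) (dopp (sd f)) (negb (ss f)).
Definition s1 (f : sqflag) : sqflag :=
  SqF (sx f) (sy f) (if ss f then dsucc (sd f) else dpred (sd f)) (negb (ss f)).
Definition s2 (f : sqflag) : sqflag :=
  SqF (sx f) (sy f) (sd f) (negb (ss f)).

(* ---------- The tiling E_6 of type [4^1,8^2] ----------
   Octagons of E_6 <-> vertices of E_6^#, squares <-> faces of E_6^#,
   octagon-octagon edges <-> edges of E_6^#, square edges <-> incident
   (vertex, face) pairs of E_6^#, vertices <-> incident (edge, face) pairs.
   A flag of E_6 is a flag (v,e,f) of E_6^# together with a type:
     tA : (vertex (e,f), octagon-octagon edge dual to e, octagon v)
     tB : (vertex (e,f), square edge (v,f),            octagon v)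
     tC : (vertex (e,f), square edge (v,f),            square f)        *)
Inductive ftype := tA | tB | tC.
Definition e6flag := (sqflag * ftype)%type.

Definition r0 (x : e6flag) : e6flag :=
  match snd x with tA => (s2 (fst x), tA) | tB => (s1 (fst x), tB) | tC => (s1 (fst x), tC) end.
Definition r1 (x : e6flag) : e6flag :=
  match snd x with tA => (fst x, tB) | tB => (fst x, tA) | tC => (s0 (fst x), tC) end.
Definition r2 (x : e6flag) : e6flag :=
  match snd x with tA => (s0 (fst x), tA) | tB => (fst x, tC) | tC => (fst x, tB) end.

(* ---------- The translation group K_6 ----------
   The translations of E_6 (and of E_6^#) are exactly the integer translations of Z^2;
   a rank-2 subgroup K is the lattice generated by two independent vectors u, v. *)
Definition in_lattice (u v : Z * Z) (dx dy : Z) : Prop :=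
  exists m n : Z, dx = m * fst u + n * fst v /\ dy = m * snd u + n * snd v.

Definition rank2 (u v : Z * Z) : Prop := fst u * snd v - snd u * fst v <> 0.

Definition sq_eqv (u v : Z * Z) (f g : sqflag) : Prop :=
  sd f = sd g /\ ss f = ss g /\ in_lattice u v (sx g - sx f) (sy g - sy f).

Definition e6_eqv (u v : Z * Z) (x y : e6flag) : Prop :=
  snd x = snd y /\ sq_eqv u v (fst x) (fst y).

(* ---------- Generic: maps given by flags modulo an equivalence ----------
   The flags of the quotient map E/K are the classes of [eqv]; the involutions
   descend to the quotient.  A map automorphism of E/K is a bijection of its
   flags commuting with the three involutions; we represent it by a function g
   on representatives which respects classes and induces such a bijection. *)
Definition is_qaut {F : Type} (eqv : F -> F -> Prop) (q0 q1 q2 : F -> F) (g : F -> F) : Prop :=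
  (forall x y, eqv x y -> eqv (g x) (g y)) /\
  (forall x y, eqv (g x) (g y) -> eqv x y) /\
  (forall y, exists x, eqv (g x) y) /\
  (forall x, eqv (g (q0 x)) (q0 (g x))) /\
  (forall x, eqv (g (q1 x)) (q1 (g x))) /\
  (forall x, eqv (g (q2 x)) (q2 (g x))).

(* flags x, y of E/K lie on the same edge (edges = <q0,q2>-orbits of flags) *)
Definition same_edge {F : Type} (eqv : F -> F -> Prop) (q0 q2 : F -> F) (x y : F) : Prop :=
  eqv x y \/ eqv (q0 x) y \/ eqv (q2 x) y \/ eqv (q0 (q2 x)) y.

Definition edge_orbit_rel {F : Type} (eqv : F -> F -> Prop) (q0 q1 q2 : F -> F) (x y : F) : Prop :=
  exists g, is_qaut eqv q0 q1 q2 g /\ same_edge eqv q0 q2 (g x) y.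

Definition n_classes {F : Type} (R : F -> F -> Prop) (n : nat) : Prop :=
  exists xs : list F, length xs = n /\
    ForallOrdPairs (fun x y => ~ R x y) xs /\
    (forall y, exists x, In x xs /\ R x y).

Definition X6_edge_orbits (u v : Z * Z) (n : nat) : Prop :=
  n_classes (edge_orbit_rel (e6_eqv u v) r0 r1 r2) n.
Definition X6sharp_edge_orbits (u v : Z * Z) (n : nat) : Prop :=
  n_classes (edge_orbit_rel (sq_eqv u v) s0 s1 s2) n.

From Stdlib Require Import ZArith List Lia Bool Setoid Morphisms Classical.
Open Scope Z_scope.
Import ListNotations.

(* Every automorphism of E_6/K (or of E_6^#/K) is induced by an affine symmetry x |-> A x + t
   of the tiling whose linear part A, an element of D_4, preserves K: such a symmetry agrees
   with the automorphism on one flag, and the flag graph is connected.  Modulo translations the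
   edges of E_6^# fall into two classes (horizontal, vertical), and those of E_6 into six: two
   classes of octagon-octagon edges and four of square edges, one for each quadrant in which
   the square lies as seen from the octagon.  Since -1 always preserves K, the edge orbits of
   X_6^# number a = 1 or 2 according as some A preserving K swaps the two axes or not, and
   those of X_6 number a + d, where d = 1 or 2 according as some A preserving K exchanges the
   two diagonals or not.  The four claims are then arithmetic in a, d in {1, 2}. *)

Section ClassCounting.
Context {F : Type} (R : F -> F -> Prop).

Lemma pairwise_unrelated_length_le (xs ys : list F) :
  (forall x y z, R x y -> R x z -> R y z) ->
  ForallOrdPairs (fun x y => ~ R x y) xs ->
  (forall x, In x xs -> exists y, In y ys /\ R y x) ->
  (length xs <= length ys)%nat.
Proof.
  intros Heucl Hxs. revert ys.
  induction Hxs as [|x xs Hx Hxs IH]; intros ys Hcover; simpl; [lia|].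
  destruct (Hcover x (or_introl eq_refl)) as [y [Hy Hyx]].
  destruct (in_split _ _ Hy) as [l1 [l2 ->]].
  enough (length xs <= length (l1 ++ l2))%nat by (rewrite !length_app in *; simpl; lia).
  apply IH. intros x' Hx'.
  destruct (Hcover x' (or_intror Hx')) as [y' [Hy' Hy'x']].
  destruct (in_elt_inv _ _ _ _ Hy') as [-> | Hin]; [|now exists y'].
  rewrite Forall_forall in Hx. contradiction (Hx x' Hx' (Heucl _ _ _ Hyx Hy'x')).
Qed.

Lemma n_classes_unique n m :
  (forall x y z, R x y -> R x z -> R y z) -> n_classes R n -> n_classes R m -> n = m.
Proof.
  intros Heucl [xs [<- [Hxs Hcovx]]] [ys [<- [Hys Hcovy]]].
  apply Nat.le_antisymm; eapply pairwise_unrelated_length_le; eauto.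
Qed.

Lemma NoDup_map_unrelated {C : Type} (c : F -> C) (xs : list F) :
  (forall x y, R x y -> c x = c y) ->
  NoDup (map c xs) -> ForallOrdPairs (fun x y => ~ R x y) xs.
Proof.
  intros Hc. induction xs as [|x xs IH]; simpl; intros Hnd; constructor.
  - inversion_clear Hnd as [|? ? Hnotin _]. apply Forall_forall.
    intros y Hy Hxy. apply Hnotin, in_map_iff. exists y. split; [symmetry; auto | exact Hy].
  - apply IH. now inversion Hnd.
Qed.

Lemma n_classes_kernel_iff {C : Type} (c : F -> C) (cs : list C) :
  (forall x y, R x y <-> c x = c y) ->
  NoDup cs -> (forall x, In (c x) cs) -> (forall k, In k cs -> exists x, c x = k) ->
  forall n, n_classes R n <-> n = length cs.
Proof.
  intros HR Hnd Himg Hsurj.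
  assert (Hws : exists ws, map c ws = cs).
  { clear - Hsurj. induction cs as [|k cs IH]; [now exists []|].
    destruct (Hsurj k (or_introl eq_refl)) as [x Hx].
    destruct IH as [ws Hws]; [intros; apply Hsurj; now right|].
    exists (x :: ws). simpl. congruence. }
  destruct Hws as [ws <-].
  assert (Hcount : n_classes R (length (map c ws))).
  { exists ws. rewrite length_map. split; [reflexivity|split].
    - apply (NoDup_map_unrelated c); [apply HR | exact Hnd].
    - intros y. destruct (proj1 (in_map_iff c ws (c y)) (Himg y)) as [x [Hxy Hx]].
      exists x. split; [exact Hx | now apply HR]. }
  intros n. split; [|now intros ->].
  intros Hn. refine (n_classes_unique _ _ _ Hn Hcount).
  intros x y z Hxy Hxz. apply HR in Hxy, Hxz. apply HR. congruence.
Qed.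

End ClassCounting.

Section QuotientMaps.
Context {F : Type} (eqv : F -> F -> Prop) `{Equivalence F eqv} (q0 q1 q2 : F -> F).
Context {q0_proper : Proper (eqv ==> eqv) q0} {q1_proper : Proper (eqv ==> eqv) q1}
        {q2_proper : Proper (eqv ==> eqv) q2}.

Definition flag_connected (b : F) : Prop :=
  forall S : F -> Prop,
    (forall x, S x -> S (q0 x)) -> (forall x, S x -> S (q1 x)) -> (forall x, S x -> S (q2 x)) ->
    S b -> forall x, S x.

Lemma qaut_of_commuting (h : F -> F) :
  (forall x y, eqv (h x) (h y) <-> eqv x y) -> (forall y, exists x, h x = y) ->
  (forall x, h (q0 x) = q0 (h x)) -> (forall x, h (q1 x) = q1 (h x)) ->
  (forall x, h (q2 x) = q2 (h x)) -> is_qaut eqv q0 q1 q2 h.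
Proof.
  intros Hiff Hsurj H0 H1 H2.
  repeat split; intros.
  - now apply Hiff.
  - now apply Hiff.
  - destruct (Hsurj y) as [x <-]. now exists x.
  - now rewrite H0.
  - now rewrite H1.
  - now rewrite H2.
Qed.

Lemma qaut_agree (g h : F -> F) (b : F) :
  flag_connected b -> is_qaut eqv q0 q1 q2 g ->
  (forall x, h (q0 x) = q0 (h x)) -> (forall x, h (q1 x) = q1 (h x)) ->
  (forall x, h (q2 x) = q2 (h x)) ->
  eqv (g b) (h b) -> forall x, eqv (g x) (h x).
Proof.
  intros Hconn (_ & _ & _ & G0 & G1 & G2) H0 H1 H2 Hb.
  apply (Hconn (fun x => eqv (g x) (h x))); [intros x Hx..|exact Hb].
  - now rewrite G0, Hx, H0.
  - now rewrite G1, Hx, H1.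
  - now rewrite G2, Hx, H2.
Qed.

Definition face_step (x : F) : F := q0 (q1 x).

Lemma qaut_face_step_iter (g : F -> F) n x :
  is_qaut eqv q0 q1 q2 g ->
  eqv (g (Nat.iter n face_step x)) (Nat.iter n face_step (g x)).
Proof.
  intros (_ & _ & _ & G0 & G1 & _).
  induction n as [|n IH]; simpl; [reflexivity|].
  unfold face_step at 1 3. rewrite G0, G1, IH. reflexivity.
Qed.

Lemma qaut_face_step_fixed_iff (g : F -> F) n x :
  is_qaut eqv q0 q1 q2 g ->
  eqv (Nat.iter n face_step (g x)) (g x) <-> eqv (Nat.iter n face_step x) x.
Proof.
  intros Hg. rewrite <- (qaut_face_step_iter g n x Hg).
  destruct Hg as (Hresp & Hrefl & _). split; [apply Hrefl | apply Hresp].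
Qed.

Lemma same_edge_eqv_l a b y :
  eqv a b -> same_edge eqv q0 q2 b y -> same_edge eqv q0 q2 a y.
Proof. intros Hab. unfold same_edge. now rewrite Hab. Qed.

Lemma same_edge_invariant {C : Type} (c : F -> C) x y :
  Proper (eqv ==> eq) c -> (forall x, c (q0 x) = c x) -> (forall x, c (q2 x) = c x) ->
  same_edge eqv q0 q2 x y -> c x = c y.
Proof.
  intros Hc H0 H2 [E|[E|[E|E]]]; rewrite <- E; now rewrite ?H0, ?H2.
Qed.

End QuotientMaps.

(* The point group D_4 of the square lattice, as signed permutation matrices. *)
Record d4 := D4 { swapxy : bool; negx : bool; negy : bool }.

Definition sgn (b : bool) (z : Z) : Z := if b then - z else z.

Definition d4_vec (A : d4) (p : Z * Z) : Z * Z :=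
  let q := if swapxy A then (snd p, fst p) else p in
  (sgn (negx A) (fst q), sgn (negy A) (snd q)).

Definition d4_id : d4 := D4 false false false.
Definition d4_opp (A : d4) : d4 := D4 (swapxy A) (negb (negx A)) (negb (negy A)).
Definition d4_inv (A : d4) : d4 := if swapxy A then D4 true (negy A) (negx A) else A.
Definition is_reflection (A : d4) : bool := xorb (swapxy A) (xorb (negx A) (negy A)).

Definition dir_vertical (d : dir) : bool := match d with dN | dS => true | _ => false end.
Definition dir_negative (d : dir) : bool := match d with dW | dS => true | _ => false end.
Definition dir_of (vertical negative : bool) : dir :=
  match vertical, negative with
  | false, false => dE | true, false => dN | false, true => dW | true, true => dS
  end.

(* The direction [d] moved by [A]: [dvec (d4_dir A d) = d4_vec A (dvec d)]. *)
Definition d4_dir (A : d4) (d : dir) : dir :=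
  let vertical := xorb (swapxy A) (dir_vertical d) in
  dir_of vertical (xorb (if vertical then negy A else negx A) (dir_negative d)).

Lemma d4_vec_sub A a b a' b' :
  (fst (d4_vec A (a, b)) - fst (d4_vec A (a', b')), snd (d4_vec A (a, b)) - snd (d4_vec A (a', b')))
  = d4_vec A (a - a', b - b').
Proof. destruct A as [[] [] []]; unfold d4_vec, sgn; simpl; f_equal; ring. Qed.

Lemma d4_vec_zero A : d4_vec A (0, 0) = (0, 0).
Proof. now destruct A as [[] [] []]. Qed.

Lemma d4_vec_opp A p : d4_vec (d4_opp A) p = (- fst (d4_vec A p), - snd (d4_vec A p)).
Proof. destruct A as [[] [] []]; unfold d4_vec, sgn; simpl; f_equal; ring. Qed.

(* [A] has order dividing 4, so [A^-1 = A^3]. *)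
Lemma d4_vec_inv A p : d4_vec (d4_inv A) p = d4_vec A (d4_vec A (d4_vec A p)).
Proof. destruct A as [[] [] []], p; unfold d4_vec, sgn; simpl; f_equal; ring. Qed.

Section Lattice.
Variables u v : Z * Z.

Definition in_lattice_vec (p : Z * Z) : Prop := in_lattice u v (fst p) (snd p).

Definition preserves_lattice (A : d4) : Prop :=
  forall p, in_lattice_vec p -> in_lattice_vec (d4_vec A p).

Lemma in_lattice_of_zero a b : a = 0 -> b = 0 -> in_lattice u v a b.
Proof. intros -> ->. exists 0, 0. lia. Qed.

Lemma in_lattice_add a b c d :
  in_lattice u v a b -> in_lattice u v c d -> in_lattice u v (a + c) (b + d).
Proof. intros (m & n & -> & ->) (m' & n' & -> & ->). exists (m + m'), (n + n'). split; ring. Qed.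

Lemma in_lattice_opp a b : in_lattice u v a b -> in_lattice u v (- a) (- b).
Proof. intros (m & n & -> & ->). exists (- m), (- n). split; ring. Qed.

Lemma preserves_lattice_id : preserves_lattice d4_id.
Proof. now intros [a b]. Qed.

Lemma preserves_lattice_opp A : preserves_lattice A -> preserves_lattice (d4_opp A).
Proof. intros HA p Hp. red. rewrite d4_vec_opp. now apply in_lattice_opp, HA. Qed.

Lemma preserves_lattice_inv A : preserves_lattice A -> preserves_lattice (d4_inv A).
Proof. intros HA p Hp. red. rewrite d4_vec_inv. now apply HA, HA, HA. Qed.

Instance sq_eqv_equiv : Equivalence (sq_eqv u v).
Proof.
  split.
  - intros f. repeat split. now apply in_lattice_of_zero; ring.
  - intros f g (Hd & Hs & Hl). repeat split; auto.
    replace (sx f - sx g) with (- (sx g - sx f)) by ring.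
    replace (sy f - sy g) with (- (sy g - sy f)) by ring.
    now apply in_lattice_opp.
  - intros f g h (Hd & Hs & Hl) (Hd' & Hs' & Hl'). repeat split; try congruence.
    replace (sx h - sx f) with ((sx g - sx f) + (sx h - sx g)) by ring.
    replace (sy h - sy f) with ((sy g - sy f) + (sy h - sy g)) by ring.
    now apply in_lattice_add.
Qed.

Lemma sq_eqv_intro f g :
  sd f = sd g -> ss f = ss g -> sx g - sx f = 0 -> sy g - sy f = 0 -> sq_eqv u v f g.
Proof. intros Hd Hs Hx Hy. repeat split; auto. now apply in_lattice_of_zero. Qed.

Instance s0_proper : Proper (sq_eqv u v ==> sq_eqv u v) s0.
Proof.
  intros [a b d s] [a' b' d' s'] (Hd & Hs & Hl). simpl in *. subst d' s'.
  repeat split. unfold s0; simpl.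
  now replace (a' + fst (dvec d) - (a + fst (dvec d))) with (a' - a) by ring;
    replace (b' + snd (dvec d) - (b + snd (dvec d))) with (b' - b) by ring.
Qed.

Instance s1_proper : Proper (sq_eqv u v ==> sq_eqv u v) s1.
Proof. intros [a b d s] [a' b' d' s'] (Hd & Hs & Hl). simpl in *. now subst d' s'. Qed.

Instance s2_proper : Proper (sq_eqv u v ==> sq_eqv u v) s2.
Proof. intros [a b d s] [a' b' d' s'] (Hd & Hs & Hl). simpl in *. now subst d' s'. Qed.

End Lattice.

Definition sq_translate (t : Z * Z) (f : sqflag) : sqflag :=
  SqF (sx f + fst t) (sy f + snd t) (sd f) (ss f).

Definition sq_linear (A : d4) (f : sqflag) : sqflag :=
  let p := d4_vec A (sx f, sy f) in
  SqF (fst p) (snd p) (d4_dir A (sd f)) (xorb (is_reflection A) (ss f)).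

Definition sq_affine (A : d4) (t : Z * Z) (f : sqflag) : sqflag := sq_translate t (sq_linear A f).

Definition e6_map (h : sqflag -> sqflag) (x : e6flag) : e6flag := (h (fst x), snd x).

Lemma sq_translate_s0 t f : sq_translate t (s0 f) = s0 (sq_translate t f).
Proof. unfold sq_translate, s0; simpl; f_equal; ring. Qed.

Lemma sq_linear_s0 A f : sq_linear A (s0 f) = s0 (sq_linear A f).
Proof.
  destruct f as [a b d s]; destruct A as [[] [] []], d, s;
    unfold sq_linear, s0, d4_vec, sgn; simpl; f_equal; ring.
Qed.
Lemma sq_linear_s1 A f : sq_linear A (s1 f) = s1 (sq_linear A f).
Proof. destruct f as [a b d s]; now destruct A as [[] [] []], d, s. Qed.
Lemma sq_linear_s2 A f : sq_linear A (s2 f) = s2 (sq_linear A f).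
Proof. destruct f as [a b d s]; now destruct A as [[] [] []], d, s. Qed.

Lemma sq_linear_inv_l A f : sq_linear (d4_inv A) (sq_linear A f) = f.
Proof.
  destruct f as [a b d s]; destruct A as [[] [] []], d, s;
    unfold sq_linear, d4_vec, sgn; simpl; f_equal; ring.
Qed.
Lemma sq_linear_inv_r A f : sq_linear A (sq_linear (d4_inv A) f) = f.
Proof.
  destruct f as [a b d s]; destruct A as [[] [] []], d, s;
    unfold sq_linear, d4_vec, sgn; simpl; f_equal; ring.
Qed.

Lemma sq_affine_s0 A t f : sq_affine A t (s0 f) = s0 (sq_affine A t f).
Proof. unfold sq_affine. now rewrite sq_linear_s0, sq_translate_s0. Qed.
Lemma sq_affine_s1 A t f : sq_affine A t (s1 f) = s1 (sq_affine A t f).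
Proof. unfold sq_affine. now rewrite sq_linear_s1. Qed.
Lemma sq_affine_s2 A t f : sq_affine A t (s2 f) = s2 (sq_affine A t f).
Proof. unfold sq_affine. now rewrite sq_linear_s2. Qed.

Lemma e6_map_r0 h x :
  (forall f, h (s1 f) = s1 (h f)) -> (forall f, h (s2 f) = s2 (h f)) ->
  e6_map h (r0 x) = r0 (e6_map h x).
Proof. intros H1 H2. destruct x as [f []]; unfold e6_map; simpl; now rewrite ?H1, ?H2. Qed.
Lemma e6_map_r1 h x : (forall f, h (s0 f) = s0 (h f)) -> e6_map h (r1 x) = r1 (e6_map h x).
Proof. intros H0. destruct x as [f []]; unfold e6_map; simpl; now rewrite ?H0. Qed.
Lemma e6_map_r2 h x : (forall f, h (s0 f) = s0 (h f)) -> e6_map h (r2 x) = r2 (e6_map h x).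
Proof. intros H0. destruct x as [f []]; unfold e6_map; simpl; now rewrite ?H0. Qed.

Section AffineAutomorphisms.
Variables u v : Z * Z.
Existing Instance sq_eqv_equiv.

Lemma sq_eqv_translate t f g : sq_eqv u v (sq_translate t f) (sq_translate t g) <-> sq_eqv u v f g.
Proof.
  unfold sq_eqv, sq_translate; simpl.
  now replace (sx g + fst t - (sx f + fst t)) with (sx g - sx f) by ring;
    replace (sy g + snd t - (sy f + snd t)) with (sy g - sy f) by ring.
Qed.

Lemma sq_eqv_linear A f g :
  preserves_lattice u v A -> sq_eqv u v f g -> sq_eqv u v (sq_linear A f) (sq_linear A g).
Proof.
  intros HA (Hd & Hs & Hl). unfold sq_linear. repeat split; simpl; try congruence.
  pose proof (HA (sx g - sx f, sy g - sy f) Hl) as HAl.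
  now rewrite <- d4_vec_sub in HAl.
Qed.

Lemma sq_eqv_affine_iff A t f g :
  preserves_lattice u v A ->
  sq_eqv u v (sq_affine A t f) (sq_affine A t g) <-> sq_eqv u v f g.
Proof.
  intros HA. unfold sq_affine. rewrite sq_eqv_translate. split; [|now apply sq_eqv_linear].
  intros E. rewrite <- (sq_linear_inv_l A f), <- (sq_linear_inv_l A g).
  now apply sq_eqv_linear; [apply preserves_lattice_inv|].
Qed.

Lemma sq_affine_surjective A t y : exists x, sq_affine A t x = y.
Proof.
  exists (sq_linear (d4_inv A) (sq_translate (- fst t, - snd t) y)).
  unfold sq_affine. rewrite sq_linear_inv_r. destruct y. unfold sq_translate; simpl; f_equal; ring.
Qed.

Lemma sq_affine_qaut A t :
  preserves_lattice u v A -> is_qaut (sq_eqv u v) s0 s1 s2 (sq_affine A t).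
Proof.
  intros HA. apply (qaut_of_commuting (sq_eqv u v)).
  - intros. now apply sq_eqv_affine_iff.
  - apply sq_affine_surjective.
  - apply sq_affine_s0.
  - apply sq_affine_s1.
  - apply sq_affine_s2.
Qed.

Instance e6_eqv_equiv : Equivalence (e6_eqv u v).
Proof.
  split.
  - intros x. split; reflexivity.
  - intros x y [Ht Hf]. split; now symmetry.
  - intros x y z [Ht Hf] [Ht' Hf']. split; etransitivity; eauto.
Qed.

Lemma e6_eqv_map h x y :
  (forall f g, sq_eqv u v (h f) (h g) <-> sq_eqv u v f g) ->
  e6_eqv u v (e6_map h x) (e6_map h y) <-> e6_eqv u v x y.
Proof. intros Hh. unfold e6_eqv, e6_map; simpl. now rewrite Hh. Qed.

Lemma e6_affine_qaut A t :
  preserves_lattice u v A -> is_qaut (e6_eqv u v) r0 r1 r2 (e6_map (sq_affine A t)).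
Proof.
  intros HA. apply (qaut_of_commuting (e6_eqv u v)).
  - intros. apply e6_eqv_map. intros. now apply sq_eqv_affine_iff.
  - intros [y ty]. destruct (sq_affine_surjective A t y) as [x Hx]. exists (x, ty).
    unfold e6_map; simpl. now rewrite Hx.
  - intros. apply e6_map_r0; [apply sq_affine_s1 | apply sq_affine_s2].
  - intros. apply e6_map_r1, sq_affine_s0.
  - intros. apply e6_map_r2, sq_affine_s0.
Qed.

End AffineAutomorphisms.

Definition sq_base : sqflag := SqF 0 0 dE true.
Definition e6_base : e6flag := (sq_base, tA).

Lemma sq_connected : flag_connected s0 s1 s2 sq_base.
Proof.
  intros S H0 H1 H2 Hbase.
  assert (Hside : forall a b d s, S (SqF a b d s) -> S (SqF a b d true))
    by (intros a b d [] H; [exact H | exact (H2 _ H)]).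
  assert (Hturn : forall a b d, S (SqF a b d true) -> S (SqF a b (dsucc d) true))
    by (intros a b d H; exact (H2 _ (H1 _ H))).
  assert (Hvertex : forall a b d s d' s', S (SqF a b d s) -> S (SqF a b d' s')).
  { intros a b d s d' s' H. apply Hside in H.
    pose proof (Hturn _ _ _ H) as H'. pose proof (Hturn _ _ _ H') as H''.
    pose proof (Hturn _ _ _ H'') as H'''.
    assert (Ht : S (SqF a b d' true)) by (destruct d, d'; simpl in *; assumption).
    destruct s'; [exact Ht | exact (H2 _ Ht)]. }
  assert (Hstep : forall a b d,
             S (SqF a b dE true) -> S (SqF (a + fst (dvec d)) (b + snd (dvec d)) dE true))
    by (intros a b d H; exact (Hvertex _ _ _ _ dE true (H0 _ (Hvertex _ _ _ _ d true H)))).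
  assert (Hrow : forall a, S (SqF a 0 dE true)).
  { apply Z.peano_ind; [exact Hbase | intros a H..].
    - exact (Hstep _ _ dE H).
    - exact (Hstep _ _ dW H). }
  assert (Hgrid : forall a b, S (SqF a b dE true)).
  { intros a. apply Z.peano_ind; [apply Hrow | intros b H; rewrite <- (Z.add_0_r a)..].
    - exact (Hstep _ _ dN H).
    - exact (Hstep _ _ dS H). }
  intros [a b d s]. exact (Hvertex _ _ _ _ d s (Hgrid a b)).
Qed.

Lemma e6_connected : flag_connected r0 r1 r2 e6_base.
Proof.
  intros S H0 H1 H2 Hbase.
  (* On flags of type [tA], [r2], [r1 r0 r1] and [r0] act as [s0], [s1] and [s2]. *)
  assert (HA : forall f, S (f, tA)).
  { apply (sq_connected (fun f => S (f, tA))); [intros f H.. | exact Hbase].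
    - exact (H2 _ H).
    - exact (H1 _ (H0 _ (H1 _ H))).
    - exact (H0 _ H). }
  intros [f []]; [exact (HA f) | exact (H1 _ (HA f)) | exact (H2 _ (H1 _ (HA f)))].
Qed.

Lemma sq_affine_base_transitive y : exists A, sq_affine A (sx y, sy y) sq_base = y.
Proof.
  destruct y as [a b d s]; destruct d, s;
    [ exists (D4 false false false) | exists (D4 false false true)
    | exists (D4 true true false) | exists (D4 true false false)
    | exists (D4 false true true) | exists (D4 false true false)
    | exists (D4 true false true) | exists (D4 true true true) ]; reflexivity.
Qed.

Section Rigidity.
Variables u v : Z * Z.
Existing Instances sq_eqv_equiv s0_proper s1_proper s2_proper e6_eqv_equiv.

Instance r0_proper : Proper (e6_eqv u v ==> e6_eqv u v) r0.
Proof. intros [f []] [g ty] [Ht Hf]; simpl in Ht; subst ty; split; simpl; auto; now rewrite Hf. Qed.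
Instance r1_proper : Proper (e6_eqv u v ==> e6_eqv u v) r1.
Proof. intros [f []] [g ty] [Ht Hf]; simpl in Ht; subst ty; split; simpl; auto; now rewrite Hf. Qed.
Instance r2_proper : Proper (e6_eqv u v ==> e6_eqv u v) r2.
Proof. intros [f []] [g ty] [Ht Hf]; simpl in Ht; subst ty; split; simpl; auto; now rewrite Hf. Qed.

Lemma preserves_lattice_of_affine A t :
  (forall f g, sq_eqv u v f g -> sq_eqv u v (sq_affine A t f) (sq_affine A t g)) ->
  preserves_lattice u v A.
Proof.
  intros Hresp [a b] Hp.
  assert (E : sq_eqv u v sq_base (SqF a b dE true))
    by (repeat split; simpl; now rewrite !Z.sub_0_r).
  apply Hresp, sq_eqv_translate in E. destruct E as (_ & _ & Hl).
  unfold sq_linear in Hl. cbn [sx sy sq_base] in Hl.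
  rewrite d4_vec_zero, !Z.sub_0_r in Hl. exact Hl.
Qed.

Lemma sq_qaut_affine g :
  is_qaut (sq_eqv u v) s0 s1 s2 g ->
  exists A t, preserves_lattice u v A /\ forall f, sq_eqv u v (g f) (sq_affine A t f).
Proof.
  intros Hg. destruct (sq_affine_base_transitive (g sq_base)) as [A HA].
  set (t := (sx (g sq_base), sy (g sq_base))) in HA.
  assert (Hagree : forall f, sq_eqv u v (g f) (sq_affine A t f)).
  { apply (qaut_agree (sq_eqv u v) s0 s1 s2 g _ sq_base sq_connected Hg);
      [apply sq_affine_s0 | apply sq_affine_s1 | apply sq_affine_s2 | now rewrite HA]. }
  exists A, t. split; [|exact Hagree].
  apply (preserves_lattice_of_affine A t). intros f f' E.
  rewrite <- !Hagree. now apply (proj1 Hg).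
Qed.

(* [(r0 r1)^4] goes once around a square but only halfway around an octagon. *)
Lemma e6_square_flag_iff x : e6_eqv u v (Nat.iter 4 (face_step r0 r1) x) x <-> snd x = tC.
Proof.
  destruct x as [[a b d s] []]; destruct d, s; unfold e6_eqv, sq_eqv; simpl;
    split; intros H; try discriminate; try (destruct H as (_ & H & _); discriminate);
    repeat split; apply in_lattice_of_zero; ring.
Qed.

Lemma e6_qaut_square_flags g x :
  is_qaut (e6_eqv u v) r0 r1 r2 g -> snd (g x) = tC <-> snd x = tC.
Proof.
  intros Hg. rewrite <- !e6_square_flag_iff.
  now apply (qaut_face_step_fixed_iff (e6_eqv u v) r0 r1 r2).
Qed.

Lemma e6_qaut_base_type g : is_qaut (e6_eqv u v) r0 r1 r2 g -> snd (g e6_base) = tA.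
Proof.
  intros Hg.
  assert (H1 : snd (g e6_base) <> tC) by (rewrite e6_qaut_square_flags by exact Hg; discriminate).
  assert (H2 : snd (g (r2 e6_base)) <> tC) by (rewrite e6_qaut_square_flags by exact Hg; discriminate).
  destruct Hg as (_ & _ & _ & _ & _ & G2). destruct (G2 e6_base) as [E _]. rewrite E in H2.
  destruct (g e6_base) as [f []]; simpl in *; congruence.
Qed.

Lemma e6_qaut_affine g :
  is_qaut (e6_eqv u v) r0 r1 r2 g ->
  exists A t, preserves_lattice u v A /\ forall x, e6_eqv u v (g x) (e6_map (sq_affine A t) x).
Proof.
  intros Hg. pose proof (e6_qaut_base_type g Hg) as Htype.
  destruct (sq_affine_base_transitive (fst (g e6_base))) as [A HA].
  set (t := (sx (fst (g e6_base)), sy (fst (g e6_base)))) in HA.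
  assert (Hagree : forall x, e6_eqv u v (g x) (e6_map (sq_affine A t) x)).
  { apply (qaut_agree (e6_eqv u v) r0 r1 r2 g _ e6_base e6_connected Hg); [intros x..|].
    - apply e6_map_r0; [apply sq_affine_s1 | apply sq_affine_s2].
    - apply e6_map_r1, sq_affine_s0.
    - apply e6_map_r2, sq_affine_s0.
    - unfold e6_map. change (fst e6_base) with sq_base. change (snd e6_base) with tA.
      rewrite HA, <- Htype. now destruct (g e6_base). }
  exists A, t. split; [|exact Hagree].
  apply (preserves_lattice_of_affine A t). intros f f' E.
  assert (E6 : e6_eqv u v (e6_map (sq_affine A t) (f, tA)) (e6_map (sq_affine A t) (f', tA))).
  { rewrite <- !Hagree. apply (proj1 Hg). now split. }
  exact (proj2 E6).
Qed.

End Rigidity.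

Definition sq_edge_vertical (f : sqflag) : bool := dir_vertical (sd f).

Inductive edge6 := Octagonal (vertical : bool) | Square (west south : bool).

(* A square edge joins the octagon at the vertex [v] of the flag to the square [f] of the flag;
   up to translation it is determined by the quadrant of [f] as seen from [v], which is the
   sum of the directions of the two edges of [f] at [v]. *)
Definition face_corner (f : sqflag) : Z * Z :=
  (fst (dvec (sd f)) + fst (dvec (sd (s1 f))), snd (dvec (sd f)) + snd (dvec (sd (s1 f)))).

Definition e6_edge (x : e6flag) : edge6 :=
  match snd x with
  | tA => Octagonal (sq_edge_vertical (fst x))
  | _ => Square (fst (face_corner (fst x)) <? 0) (snd (face_corner (fst x)) <? 0)
  end.

Definition d4_edge6 (A : d4) (e : edge6) : edge6 :=
  match e with
  | Octagonal vertical => Octagonal (xorb (swapxy A) vertical)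
  | Square w s =>
      Square (xorb (negx A) (if swapxy A then s else w)) (xorb (negy A) (if swapxy A then w else s))
  end.

Lemma sq_edge_vertical_linear A f :
  sq_edge_vertical (sq_linear A f) = xorb (swapxy A) (sq_edge_vertical f).
Proof. destruct f as [a b d s]; now destruct A as [[] [] []], d. Qed.

Lemma e6_edge_linear A x : e6_edge (e6_map (sq_linear A) x) = d4_edge6 A (e6_edge x).
Proof. destruct x as [[a b d s] ty]; now destruct A as [[] [] []], d, s, ty. Qed.

Lemma e6_edge_r0 x : e6_edge (r0 x) = e6_edge x.
Proof. destruct x as [[a b d s] ty]; now destruct ty, d, s. Qed.

Lemma e6_edge_r2 x : e6_edge (r2 x) = e6_edge x.
Proof. destruct x as [[a b d s] ty]; now destruct ty, d, s. Qed.

Lemma sq_edge_vertical_s0 f : sq_edge_vertical (s0 f) = sq_edge_vertical f.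
Proof. destruct f as [a b d s]; now destruct d. Qed.

Section EdgeOrbits.
Variables u v : Z * Z.
Existing Instances sq_eqv_equiv s0_proper s2_proper e6_eqv_equiv r0_proper r2_proper.

Instance sq_edge_vertical_proper : Proper (sq_eqv u v ==> eq) sq_edge_vertical.
Proof. intros f g (Hd & _). unfold sq_edge_vertical. now rewrite Hd. Qed.

Instance e6_edge_proper : Proper (e6_eqv u v ==> eq) e6_edge.
Proof.
  intros [[a b d s] ty] [[a' b' d' s'] ty'] (Ht & Hd & Hs & _). simpl in *. now subst.
Qed.

Local Ltac same_edge_by tac :=
  unfold same_edge;
  first [ left; tac | right; left; tac | right; right; left; tac | right; right; right; tac ].

Local Ltac translate_onto_edge dx dy tac :=
  first [ exists (dx, dy); same_edge_by tac
        | exists (dx - 1, dy); same_edge_by tac | exists (dx + 1, dy); same_edge_by tac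
        | exists (dx, dy - 1); same_edge_by tac | exists (dx, dy + 1); same_edge_by tac ].

Lemma sq_same_edge_translate f y :
  sq_edge_vertical f = sq_edge_vertical y ->
  exists t, same_edge (sq_eqv u v) s0 s2 (sq_translate t f) y.
Proof.
  destruct f as [a b d s], y as [a' b' d' s']. unfold sq_edge_vertical; simpl.
  destruct d, s, d', s'; intros H; try discriminate;
    translate_onto_edge (a' - a) (b' - b) ltac:(apply sq_eqv_intro; simpl; reflexivity || ring).
Qed.

Lemma e6_same_edge_translate x y :
  e6_edge x = e6_edge y -> exists t, same_edge (e6_eqv u v) r0 r2 (e6_map (sq_translate t) x) y.
Proof.
  destruct x as [[a b d s] ty], y as [[a' b' d' s'] ty'].
  destruct ty, ty', d, s, d', s'; intros H; simpl in H; try discriminate;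
    translate_onto_edge (a' - a) (b' - b)
      ltac:(split; [reflexivity | apply sq_eqv_intro; simpl; reflexivity || ring]).
Qed.

Lemma X6sharp_edge_orbit_rel_iff x y :
  edge_orbit_rel (sq_eqv u v) s0 s1 s2 x y <->
  exists A, preserves_lattice u v A /\ sq_edge_vertical y = xorb (swapxy A) (sq_edge_vertical x).
Proof.
  split.
  - intros (g & Hg & Hxy). destruct (sq_qaut_affine u v g Hg) as (A & t & HA & Hagree).
    exists A. split; [exact HA|]. rewrite <- (sq_edge_vertical_linear A x).
    change (sq_edge_vertical (sq_linear A x)) with (sq_edge_vertical (sq_affine A t x)).
    symmetry. apply (same_edge_invariant (sq_eqv u v) s0 s2);
      [exact _ | apply sq_edge_vertical_s0 | reflexivity |].
    apply (same_edge_eqv_l (sq_eqv u v) s0 s2 _ (g x)); [symmetry; apply Hagree | exact Hxy].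
  - intros (A & HA & Hxy).
    destruct (sq_same_edge_translate (sq_linear A x) y) as [t Ht].
    { rewrite sq_edge_vertical_linear, Hxy. reflexivity. }
    exists (sq_affine A t). split; [now apply sq_affine_qaut | exact Ht].
Qed.

Lemma X6_edge_orbit_rel_iff x y :
  edge_orbit_rel (e6_eqv u v) r0 r1 r2 x y <->
  exists A, preserves_lattice u v A /\ e6_edge y = d4_edge6 A (e6_edge x).
Proof.
  split.
  - intros (g & Hg & Hxy). destruct (e6_qaut_affine u v g Hg) as (A & t & HA & Hagree).
    exists A. split; [exact HA|]. rewrite <- (e6_edge_linear A x).
    change (e6_edge (e6_map (sq_linear A) x)) with (e6_edge (e6_map (sq_affine A t) x)).
    symmetry. apply (same_edge_invariant (e6_eqv u v) r0 r2);
      [exact _ | apply e6_edge_r0 | apply e6_edge_r2 |].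
    apply (same_edge_eqv_l (e6_eqv u v) r0 r2 _ (g x)); [symmetry; apply Hagree | exact Hxy].
  - intros (A & HA & Hxy).
    destruct (e6_same_edge_translate (e6_map (sq_linear A) x) y) as [t Ht].
    { rewrite e6_edge_linear, Hxy. reflexivity. }
    exists (e6_map (sq_affine A t)). split; [now apply e6_affine_qaut | exact Ht].
Qed.

End EdgeOrbits.

Definition orbit_label (merged b : bool) : bool := negb merged && b.
Definition orbit_reps (merged : bool) : list bool := if merged then [false] else [false; true].

Definition turns_diagonals (A : d4) : bool := xorb (negx A) (negy A).

Definition edge6_label (axes diagonals : bool) (e : edge6) : bool + bool :=
  match e with
  | Octagonal vertical => inl (orbit_label axes vertical)
  | Square w s => inr (orbit_label diagonals (xorb w s))
  end.

Definition edge6_reps (axes diagonals : bool) : list edge6 :=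
  map Octagonal (orbit_reps axes) ++ map (Square false) (orbit_reps diagonals).

Lemma orbit_label_xorb m c b : (c = true -> m = true) -> orbit_label m (xorb c b) = orbit_label m b.
Proof. unfold orbit_label. destruct m, c, b; simpl; intros H; auto; discriminate (H eq_refl). Qed.

Lemma orbit_label_merged m b b' : b' <> b -> orbit_label m b = orbit_label m b' -> m = true.
Proof. unfold orbit_label. destruct m, b, b'; simpl; intros; congruence. Qed.

Section PointGroupOrbits.
Variable G : d4 -> Prop.
Hypothesis G_id : G d4_id.
Hypothesis G_opp : forall A, G A -> G (d4_opp A).
Variables axes diagonals : bool.
Hypothesis axes_spec : axes = true <-> exists A, G A /\ swapxy A = true.
Hypothesis diagonals_spec : diagonals = true <-> exists A, G A /\ turns_diagonals A = true.

Lemma axis_orbit_iff b b' :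
  (exists A, G A /\ b' = xorb (swapxy A) b) <-> orbit_label axes b = orbit_label axes b'.
Proof.
  split.
  - intros (A & HA & ->). symmetry. apply orbit_label_xorb. intros Hs. apply axes_spec. eauto.
  - intros H. destruct (Bool.bool_dec b' b) as [-> | Hne]; [now exists d4_id|].
    apply (orbit_label_merged _ _ _ Hne), axes_spec in H as (A & HA & Hs).
    exists A. rewrite Hs. now destruct b, b'.
Qed.

(* The witness is [C] or [-C]. *)
Lemma square_orbit_step C w s w' s' :
  G C -> xorb w' s' = xorb (turns_diagonals C) (xorb w s) ->
  exists A, G A /\ Square w' s' = d4_edge6 A (Square w s).
Proof.
  intros HC. pose proof (G_opp C HC) as HC'.
  destruct C as [[] [] []], w, s, w', s'; simpl; intros H; try discriminate H;
    first [ eexists; split; [exact HC | reflexivity] | eexists; split; [exact HC' | reflexivity] ].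
Qed.

Lemma edge6_label_d4 A e :
  (swapxy A = true -> axes = true) -> (turns_diagonals A = true -> diagonals = true) ->
  edge6_label axes diagonals (d4_edge6 A e) = edge6_label axes diagonals e.
Proof.
  intros Hax Hdiag. destruct e as [vertical | w s]; simpl; f_equal.
  - now apply orbit_label_xorb.
  - rewrite <- (orbit_label_xorb diagonals (turns_diagonals A) (xorb w s)) by exact Hdiag.
    f_equal. unfold turns_diagonals. now destruct (swapxy A), (negx A), (negy A), w, s.
Qed.

Lemma edge6_orbit_iff e e' :
  (exists A, G A /\ e' = d4_edge6 A e) <->
  edge6_label axes diagonals e = edge6_label axes diagonals e'.
Proof.
  split.
  - intros (A & HA & ->). symmetry.
    apply edge6_label_d4; intros H; [apply axes_spec | apply diagonals_spec]; eauto.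
  - destruct e as [vertical | w s], e' as [vertical' | w' s']; simpl; intros H;
      try discriminate H; injection H as H.
    + apply axis_orbit_iff in H as (A & HA & Hv). exists A. now rewrite Hv.
    + destruct (Bool.bool_dec (xorb w' s') (xorb w s)) as [Heq | Hne].
      * now apply (square_orbit_step d4_id).
      * apply (orbit_label_merged _ _ _ Hne), diagonals_spec in H as (C & HC & Hturn).
        apply (square_orbit_step C); [exact HC|]. rewrite Hturn. now destruct w, s, w', s'.
Qed.

End PointGroupOrbits.

Lemma e6_edge_surjective e : exists x, e6_edge x = e.
Proof.
  destruct e as [[] | [] []];
    [ exists (SqF 0 0 dN true, tA) | exists (SqF 0 0 dE true, tA)
    | exists (SqF 0 0 dW true, tB) | exists (SqF 0 0 dN true, tB)
    | exists (SqF 0 0 dS true, tB) | exists (SqF 0 0 dE true, tB) ]; reflexivity.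
Qed.

Section Counts.
Variables u v : Z * Z.

Definition lattice_swaps_axes : Prop :=
  exists A, preserves_lattice u v A /\ swapxy A = true.
Definition lattice_turns_diagonals : Prop :=
  exists A, preserves_lattice u v A /\ turns_diagonals A = true.

Lemma X6sharp_edge_orbits_iff axes :
  (axes = true <-> lattice_swaps_axes) ->
  forall n, X6sharp_edge_orbits u v n <-> n = length (orbit_reps axes).
Proof.
  intros Hax.
  apply (n_classes_kernel_iff _ (fun f => orbit_label axes (sq_edge_vertical f))).
  - intros x y. rewrite X6sharp_edge_orbit_rel_iff.
    exact (axis_orbit_iff _ (preserves_lattice_id u v) axes Hax _ _).
  - destruct axes; repeat constructor; simpl; intuition discriminate.
  - intros x. destruct axes, (sq_edge_vertical x); simpl; tauto.
  - intros k Hk. exists (SqF 0 0 (dir_of k false) true).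
    destruct axes, k; simpl in *; intuition discriminate.
Qed.

Lemma X6_edge_orbits_iff axes diagonals :
  (axes = true <-> lattice_swaps_axes) -> (diagonals = true <-> lattice_turns_diagonals) ->
  forall n, X6_edge_orbits u v n <->
            n = (length (orbit_reps axes) + length (orbit_reps diagonals))%nat.
Proof.
  intros Hax Hdiag.
  replace (length (orbit_reps axes) + length (orbit_reps diagonals))%nat
    with (length (map (edge6_label axes diagonals) (edge6_reps axes diagonals)))
    by (now destruct axes, diagonals).
  apply (n_classes_kernel_iff _ (fun x => edge6_label axes diagonals (e6_edge x))).
  - intros x y. rewrite X6_edge_orbit_rel_iff.
    exact (edge6_orbit_iff _ (preserves_lattice_id u v) (preserves_lattice_opp u v)
             axes diagonals Hax Hdiag _ _).
  - destruct axes, diagonals; simpl; repeat constructor; simpl; intuition discriminate.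
  - intros x. destruct (e6_edge x) as [[] | [] []], axes, diagonals; simpl; tauto.
  - intros k (e & <- & _)%in_map_iff. destruct (e6_edge_surjective e) as [x Hx].
    exists x. now rewrite Hx.
Qed.

End Counts.

Lemma bool_reflect_prop (P : Prop) : exists b, b = true <-> P.
Proof.
  destruct (classic P) as [HP | HnP]; [exists true | exists false]; split; easy.
Qed.

Lemma edge_orbit_counts u v :
  exists a d : nat, (a = 1 \/ a = 2)%nat /\ (d = 1 \/ d = 2)%nat /\
    (forall n, X6sharp_edge_orbits u v n <-> n = a) /\
    (forall n, X6_edge_orbits u v n <-> n = (a + d)%nat).
Proof.
  destruct (bool_reflect_prop (lattice_swaps_axes u v)) as [axes Hax].
  destruct (bool_reflect_prop (lattice_turns_diagonals u v)) as [diagonals Hdiag].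
  exists (length (orbit_reps axes)), (length (orbit_reps diagonals)).
  split; [destruct axes; simpl; lia|].
  split; [destruct diagonals; simpl; lia|].
  split; [now apply X6sharp_edge_orbits_iff | now apply X6_edge_orbits_iff].
Qed.

Theorem lemma3p6 (u v : Z * Z) (hK : rank2 u v) :
  (X6sharp_edge_orbits u v 2 -> X6_edge_orbits u v 3 \/ X6_edge_orbits u v 4) /\
  (X6sharp_edge_orbits u v 1 -> X6_edge_orbits u v 2 \/ X6_edge_orbits u v 3) /\
  (X6_edge_orbits u v 4 -> X6sharp_edge_orbits u v 2) /\
  (X6_edge_orbits u v 2 -> X6sharp_edge_orbits u v 1).
Proof.
  destruct (edge_orbit_counts u v) as (a & d & Ha & Hd & Hsharp & H6).
  rewrite !Hsharp, !H6. lia.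
Qed.
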